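(* Let $S$ be a stacked $2$-sphere and let $\alpha=abc$ and $\beta=abd$ be two triangles of $S$, with $\overline{\alpha}$ (resp. $\overline{\beta}$) the unique tetrahedron of $\overline{S}$ containing $\alpha$ (resp. $\beta$). (a) If $\overline{\alpha}$ and $\overline{\beta}$ are adjacent nodes of the dual graph $\Lambda(\overline{S})$, then $cd$ is not an edge of $S$ and the triangulated $2$-sphere $T$ obtained from $S$ by the edge flip $ab\mapsto cd$ is stacked. (b) Conversely, if $cd$ is not an edge of $S$ and the $2$-sphere $T$ obtained by the edge flip $ab\mapsto cd$ is stacked, then $\overline{\alpha}$ and $\overline{\beta}$ are adjacent in $\Lambda(\overline{S})$.
   Context: A triangulated $2$-sphere is a finite simplicial complex whose geometric realization is homeomorphic to the $2$-sphere. Edge flip $ab\mapsto cd$: if $abc,abd$ are triangles and $cd$ is not an edge, replace $abc,abd$ by $acd,bcd$. A stacked $3$-ball is a simplicial complex obtained from a single tetrahedron (with its faces) by repeatedly gluing a new tetrahedron along exactly one triangle of the boundary, introducing one new vertex each time. A stacked $2$-sphere is a triangulated $2$-sphere isomorphic to the boundary of a stacked $3$-ball. For a stacked $2$-sphere $S$, $\overline{S}$ denotes the simplicial complex whose faces are all cliques of the edge graph of $S$; it is known that $\overline{S}$ is a stacked $3$-ball with boundary $S$, and that it is, up to isomorphism, the unique stacked $3$-ball with boundary $S$. Each triangle $\alpha$ of $S$ lies in a unique tetrahedron $\overline{\alpha}$ of $\overline{S}$. The dual graph $\Lambda(C)$ of a complex $C$ made of tetrahedra has the tetrahedra as nodes,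 two nodes being adjacent iff the tetrahedra share a triangle; for a stacked $3$-ball it is a tree with node degrees at most $4$. *)

(* Simplicial complexes are represented by their facets:
   a pure 2-dimensional complex by its set of triangles ({set {set V}}),
   a pure 3-dimensional complex by its set of tetrahedra. *)
From mathcomp Require Import all_boot.
Set Implicit Arguments. Unset Strict Implicit. Unset Printing Implicit Defensive.

Inductive stacked_ball {W : finType} : {set {set W}} -> Prop :=
  | sb_base (t : {set W}) : #|t| = 4 -> stacked_ball [set t]
  | sb_glue (B : {set {set W}}) (sigma : {set W}) (v : W) :
      stacked_ball B ->
      #|sigma| = 3 ->
      (exists2 t, t \in B & sigma \subset t) ->
      #|[set t in B | sigma \subset t]| = 1 ->
      (forall t, t \in B -> v \notin t) ->
      stacked_ball ((v |: sigma) |: B).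

Definition boundary {W : finType} (B : {set {set W}}) : {set {set W}} :=
  [set s : {set W} | (#|s| == 3) && (#|[set t in B | s \subset t]| == 1)].

Definition stacked_sphere {V : finType} (S : {set {set V}}) : Prop :=
  exists (W : finType) (B : {set {set W}}) (f : W -> V),
    [/\ injective f, stacked_ball B & S = [set f @: (s : {set W}) | s : {set W} in boundary B]].

Definition is_edge {V : finType} (S : {set {set V}}) (x y : V) : bool :=
  (x != y) && [exists s in S, (x \in s) && (y \in s)].

Definition Sbar {V : finType} (S : {set {set V}}) : {set {set V}} :=
  [set t : {set V} | (#|t| == 4) &&
     [forall x in t, forall y in t, (x != y) ==> is_edge S x y]].

Definition dual_adj {V : finType} (t1 t2 : {set V}) : bool :=
  (t1 != t2) && (#|t1 :&: t2| == 3).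

Definition edge_flip {V : finType} (S : {set {set V}}) (a b c d : V)
  : {set {set V}} :=
  [set [set a; c; d]; [set b; c; d]] :|: (S :\ [set a; b; c] :\ [set a; b; d]).

From mathcomp Require Import all_boot zify.
Set Implicit Arguments. Unset Strict Implicit. Unset Printing Implicit Defensive.

(* A stacked 3-ball is recovered from its boundary: by induction on the stacking, its
   tetrahedra are exactly the 4-cliques of its edge graph, this graph has no induced
   4-cycle, every edge of the boundary lies in exactly two boundary triangles, and two
   tetrahedra sharing a triangle have their opposite vertices in no common tetrahedron.
   (a) If abcx and abdx share the triangle abx, replacing them by acdx and bcdx is again
   a stacked ball (induction on the stacking; when abcx or abdx is the last tetrahedron
   glued, its new vertex is c or d and the two new tetrahedra can be glued instead), and
   its boundary is the flipped sphere.
   (b) If the tetrahedra over abc and abd are abcx and abdy with x <> y, then x is not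
   joined to d (else abdx would be a clique, hence the tetrahedron abdy), nor y to c. So
   the flipped sphere contains the induced 4-cycle c x y d if xy is an edge, and
   a x b y otherwise (ab is no longer an edge), and cannot bound a stacked ball. *)

Ltac rewrite_neqs := repeat match goal with
  | H : is_true (?x != ?y) |- context [?x == ?y] => rewrite (negbTE H)
  | H : is_true (?x != ?y) |- context [?y == ?x] => rewrite [y == x]eq_sym (negbTE H)
  end.

Section SmallSets.
Variable W : finType.
Implicit Types (s X : {set W}) (x y z : W).

Lemma sub_card_eq s X : s \subset X -> #|X| <= #|s| -> s = X.
Proof. by move=> sX leXs; apply/eqP; rewrite eqEcard sX leXs. Qed.

Lemma subset_card_setI s X : (s \subset X) = (#|s :&: X| == #|s|).
Proof.
rewrite -subsetIidl; apply/idP/eqP=> [H|H].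
  by apply/eqP; rewrite eqn_leq subset_leq_card ?subsetIl // subset_leq_card.
by have /eqP-> : s :&: X == s by rewrite eqEcard subsetIl H leqnn.
Qed.

Lemma cardsI1 s z : #|s :&: [set z]| = (z \in s).
Proof.
have -> : s :&: [set z] = if z \in s then [set z] else set0.
  apply/setP=> y; case: ifP => zs; rewrite !inE;
  by case: (y =P z) => [->|]; rewrite ?zs ?andbF ?andbT.
by case: (z \in s); rewrite ?cards1 ?cards0.
Qed.

Lemma cardsIU1r s X z :
  #|s :&: (X :|: [set z])| = #|s :&: X| + ((z \in s) && (z \notin X)).
Proof.
rewrite setUC -/(z |: X).
case zs: (z \in s) => /=; last first.
  rewrite addn0; have -> // : s :&: (z |: X) = s :&: X.
  by apply/setP=> y; rewrite !inE; case: (y =P z) => // ->; rewrite zs.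
have -> : s :&: (z |: X) = z |: (s :&: X).
  by apply/setP=> y; rewrite !inE; case: (y =P z) => // ->; rewrite zs.
by rewrite cardsU1 inE zs addnC.
Qed.

Lemma cardsI4 s (p1 p2 p3 p4 : W) : p1 != p2 -> p1 != p3 -> p1 != p4 ->
  p2 != p3 -> p2 != p4 -> p3 != p4 ->
  #|s :&: [set p1; p2; p3; p4]| = (p1 \in s) + (p2 \in s) + (p3 \in s) + (p4 \in s).
Proof.
by move=> *; rewrite !cardsIU1r cardsI1 !inE; rewrite_neqs; rewrite /= ?andbT.
Qed.

Lemma uniq5P (a b c d x : W) : uniq [:: a; b; c; d; x] ->
  [/\ [/\ a != b, a != c, a != d & a != x], [/\ b != c, b != d & b != x],
       c != d, c != x & d != x].
Proof.
rewrite /= !inE !negb_or => /and5P[/and4P[-> -> -> ->] /and3P[-> -> ->] /andP[-> ->] -> _].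
by [].
Qed.

Lemma mem5_le_card s (p1 p2 p3 p4 p5 : W) : uniq [:: p1; p2; p3; p4; p5] ->
  (p1 \in s) + (p2 \in s) + (p3 \in s) + (p4 \in s) + (p5 \in s) <= #|s|.
Proof.
move=> U; have [[? ? ? ?] [? ? ?] ? ? ?] := uniq5P U.
apply: leq_trans (subset_leq_card (subsetIl s [set p1; p2; p3; p4; p5])).
by rewrite !cardsIU1r cardsI1 !inE; rewrite_neqs; rewrite /= ?andbT.
Qed.

Lemma cards3 x y z : x != y -> x != z -> y != z -> #|[set x; y; z]| = 3.
Proof.
move=> xy xz yz; rewrite -setUA !cardsU1 cards1 !inE.
by rewrite (negbTE xy) (negbTE xz) (negbTE yz).
Qed.

Lemma cards4 (p1 p2 p3 p4 : W) : p1 != p2 -> p1 != p3 -> p1 != p4 ->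
  p2 != p3 -> p2 != p4 -> p3 != p4 -> #|[set p1; p2; p3; p4]| = 4.
Proof. by move=> *; rewrite -(setIid [set p1; p2; p3; p4]) cardsI4 // !inE !eqxx !orbT. Qed.

Lemma eq_set3 s x y z : #|s| = 3 -> x \in s -> y \in s -> z \in s ->
  x != y -> x != z -> y != z -> s = [set x; y; z].
Proof.
move=> s3 xs ys zs xy xz yz; apply/esym/sub_card_eq; last by rewrite s3 cards3.
by rewrite !subUset !sub1set xs ys zs.
Qed.

Lemma set3_memPn s x y z : #|s| = 3 -> x != y -> x != z -> y != z ->
  s != [set x; y; z] -> ~~ [&& x \in s, y \in s & z \in s].
Proof.
move=> s3 xy xz yz; apply: contra => /and3P[xs ys zs].
by rewrite (eq_set3 s3 xs ys zs xy xz yz).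
Qed.

Lemma exists_other s x y : 2 < #|s| -> exists z, [/\ z \in s, z != x & z != y].
Proof.
move=> s_gt2; have : 0 < #|s :\ x :\ y|.
  by move: s_gt2; rewrite (cardsD1 x s) (cardsD1 y (s :\ x)); lia.
by rewrite card_gt0 => /set0Pn[z]; rewrite !inE => /and3P[zy zx zs]; exists z.
Qed.

Lemma exists_fourth X x y z : #|X| = 4 -> x \in X -> y \in X -> z \in X ->
  x != y -> x != z -> y != z ->
  exists w, [/\ w != x, w != y, w != z & X = [set x; y; z; w]].
Proof.
move=> X4 xX yX zX xy xz yz.
have : 0 < #|X :\ x :\ y :\ z|.
  move: X4; rewrite (cardsD1 x X) (cardsD1 y (X :\ x)) (cardsD1 z (X :\ x :\ y)) !inE.
  rewrite xX yX zX; rewrite_neqs => /= e; rewrite lt0n; apply/eqP=> e0; by move: e; rewrite e0.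
rewrite card_gt0 => /set0Pn[w]; rewrite !inE => /and4P[wz wy wx wX].
exists w; split => //; apply/esym/sub_card_eq; last first.
  by rewrite X4 cards4 // eq_sym.
by rewrite !subUset !sub1set xX yX zX wX.
Qed.

End SmallSets.

Section Degree.
Variable W : finType.
Implicit Types (B : {set {set W}}) (s t X : {set W}) (x y : W).

Definition deg B s := #|[set t in B | s \subset t]|.

Definition joined B x y := [exists t in B, (x \in t) && (y \in t)].

Lemma in_boundary B s : (s \in boundary B) = (#|s| == 3) && (deg B s == 1).
Proof. by rewrite inE. Qed.

Lemma degU1 B X s : deg (X |: B) s = deg B s + ((s \subset X) && (X \notin B)).
Proof.
rewrite /deg.
have -> : [set t in X |: B | s \subset t] =
    if s \subset X then X |: [set t in B | s \subset t] else [set t in B | s \subset t].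
  apply/setP=> t; rewrite !inE; case: ifP => sX; rewrite ?inE;
  by case: eqP => [->|]; rewrite ?sX ?orbF ?andbF.
case: ifP => sX; last by rewrite addn0.
by rewrite cardsU1 inE sX andbT addnC.
Qed.

Lemma degD1 B X s : deg (B :\ X) s = deg B s - ((s \subset X) && (X \in B)).
Proof.
rewrite /deg.
have -> : [set t in B :\ X | s \subset t] = [set t in B | s \subset t] :\ X.
  by apply/setP=> t; rewrite !inE andbA.
rewrite (cardsD1 X [set t in B | s \subset t]) inE andbC.
by case: (_ && _); rewrite ?subn0 // add1n subSS subn0.
Qed.

Lemma deg_ge2 B s t1 t2 : t1 \in B -> t2 \in B -> t1 != t2 ->
  s \subset t1 -> s \subset t2 -> 2 <= deg B s.
Proof.
by move=> t1B t2B t12 st1 st2; apply/card_gt1P; exists t1, t2; rewrite !inE t1B t2B st1 st2.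
Qed.

Lemma deg1_eq B s t1 t2 : deg B s = 1 -> t1 \in B -> t2 \in B ->
  s \subset t1 -> s \subset t2 -> t1 = t2.
Proof.
move=> deg1 t1B t2B st1 st2; apply/eqP/negPn/negP=> t12.
by have := deg_ge2 t1B t2B t12 st1 st2; rewrite deg1.
Qed.

Lemma deg_gt0 B s : (0 < deg B s) = [exists t in B, s \subset t].
Proof.
rewrite /deg card_gt0; apply/set0Pn/existsP=> [] [t]; rewrite ?inE => st.
  by exists t.
by exists t; rewrite inE.
Qed.

Lemma deg_eq0 B s : (forall t, t \in B -> ~~ (s \subset t)) -> deg B s = 0.
Proof.
move=> noB; apply/eqP; rewrite /deg cards_eq0; apply/eqP/setP=> t; rewrite !inE.
by apply/negbTE/negP=> /andP[/noB/negP].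
Qed.

Lemma deg_set1 X s : deg [set X] s = (s \subset X).
Proof.
rewrite /deg; case: (boolP (s \subset X)) => sX.
  by rewrite (_ : [set t in [set X] | s \subset t] = [set X]) ?cards1 //;
    apply/setP=> t; rewrite !inE; case: eqP => // ->.
by rewrite (_ : [set t in [set X] | s \subset t] = set0) ?cards0 //;
  apply/setP=> t; rewrite !inE; case: eqP => // ->; rewrite (negbTE sX).
Qed.

Lemma boundary_card B s : s \in boundary B -> #|s| = 3.
Proof. by rewrite in_boundary => /andP[/eqP]. Qed.

Lemma boundary_deg B s : s \in boundary B -> deg B s = 1.
Proof. by rewrite in_boundary => /andP[_ /eqP]. Qed.

Lemma boundary_tet B s : s \in boundary B -> exists2 t, t \in B & s \subset t.
Proof.
rewrite in_boundary => /andP[_ /eqP deg1]; have : 0 < deg B s by rewrite deg1.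
by rewrite deg_gt0 => /existsP[t /andP[tB st]]; exists t.
Qed.

Lemma joined_tet B t x y : t \in B -> x \in t -> y \in t -> joined B x y.
Proof. by move=> tB xt yt; apply/existsP; exists t; rewrite tB xt yt. Qed.

Lemma joinedC B x y : joined B x y = joined B y x.
Proof. by apply/existsP/existsP=> -[t /and3P[? ? ?]]; exists t; apply/and3P. Qed.

Lemma joinedU1 B X x y : joined (X |: B) x y = joined B x y || (x \in X) && (y \in X).
Proof.
apply/existsP/orP=> [[t]|[/existsP[t]|xyX]].
- rewrite !inE => /andP[/orP[/eqP->|tB] xyt]; [right|left] => //.
  by apply/existsP; exists t; rewrite tB.
- by move=> /andP[tB xyt]; exists t; rewrite !inE tB orbT.
- by exists X; rewrite !inE eqxx.
Qed.

Lemma boundary_joined B s x y : s \in boundary B -> x \in s -> y \in s -> joined B x y.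
Proof.
by case/boundary_tet=> t tB /subsetP st xs ys; apply: (joined_tet tB); apply: st.
Qed.

End Degree.

Lemma card_setD_43 (W : finType) (X Y : {set W}) :
  #|X| = 4 -> #|X :&: Y| = 3 -> #|X :\: Y| = 1.
Proof.
move=> X4 XY3; move: (cardsID Y X); rewrite X4 XY3.
by move=> /eqP; rewrite -addn1 eqn_add2l => /eqP.
Qed.

Lemma tet_edge_faces (W : finType) (X s1 s2 s3 : {set W}) (u w : W) :
  #|X| = 4 -> u != w -> s1 \subset X -> s2 \subset X -> s3 \subset X ->
  #|s1| = 3 -> #|s2| = 3 -> #|s3| = 3 ->
  (u \in s1) && (w \in s1) -> (u \in s2) && (w \in s2) -> (u \in s3) && (w \in s3) ->
  [\/ s1 = s2, s1 = s3 | s2 = s3].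
Proof.
move=> X4 uw s1X s2X s3X c1 c2 c3 /andP[u1 w1] /andP[u2 w2] /andP[u3 w3].
have third (s : {set W}) : #|s| = 3 -> u \in s -> w \in s ->
    exists2 z, z \in s & [/\ z != u, z != w & s = [set u; w; z]].
  move=> s_3 us ws; have [z [zs zu zw]] : exists z, [/\ z \in s, z != u & z != w].
    by apply: exists_other; rewrite s_3.
  by exists z => //; split => //; apply: eq_set3 => //; rewrite eq_sym.
have [z1 z1s [z1u z1w E1]] := third _ c1 u1 w1.
have [z2 z2s [z2u z2w E2]] := third _ c2 u2 w2.
have [z3 z3s [z3u z3w E3]] := third _ c3 u3 w3.
case: (z1 =P z2) => [e|/eqP n12]; first by constructor 1; rewrite E1 E2 e.
case: (z1 =P z3) => [e|/eqP n13]; first by constructor 2; rewrite E1 E3 e.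
case: (z2 =P z3) => [e|/eqP n23]; first by constructor 3; rewrite E2 E3 e.
have uX : u \in X by apply: (subsetP s1X).
have wX : w \in X by apply: (subsetP s1X).
have : 2 < #|X :\ u :\ w|.
  apply/card_gt2P; exists z1, z2, z3; split; last by split => //; rewrite eq_sym.
  by split; rewrite !inE ?z1u ?z1w ?z2u ?z2w ?z3u ?z3w /=;
    [apply: (subsetP s1X) | apply: (subsetP s2X) | apply: (subsetP s3X)].
move: X4; rewrite (cardsD1 u X) (cardsD1 w (X :\ u)) uX !inE (eq_sym w) uw wX /=.
by move=> /eqP; rewrite !add1n !eqSS => /eqP <-; rewrite ltnn.
Qed.

Section Gluing.
Variables (W : finType) (B : {set {set W}}) (sg : {set W}) (v : W).
Implicit Types s t : {set W}.
Hypothesis fresh : forall t, t \in B -> v \notin t.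

Lemma glue_notin : v |: sg \notin B.
Proof. by apply/negP=> /fresh; rewrite setU11. Qed.

Lemma deg_glue s : deg ((v |: sg) |: B) s = deg B s + (s \subset v |: sg).
Proof. by rewrite degU1 glue_notin andbT. Qed.

Lemma deg_glue_eq1 X s : X \in B -> s \subset X -> deg ((v |: sg) |: B) s = 1 ->
  deg B s = 1 /\ ~~ (s \subset v |: sg).
Proof.
move=> XB sX; rewrite deg_glue => deg1.
have : 0 < deg B s by rewrite deg_gt0; apply/existsP; exists X; rewrite XB sX.
by move: deg1; case: (s \subset _); case: (deg B s) => [|[|n]] //= [].
Qed.

Lemma fresh_unjoined y : ~~ joined B v y.
Proof. by apply/existsP=> -[t /and3P[/fresh/negP]]. Qed.

Lemma fresh_deg0 s : v \in s -> deg B s = 0.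
Proof. by move=> vs; apply: deg_eq0 => t /fresh; apply: contra => /subsetP/(_ v vs). Qed.

Variable t0 : {set W}.
Hypotheses (sg3 : #|sg| = 3) (t0B : t0 \in B) (sg_t0 : sg \subset t0) (deg_sg : deg B sg = 1).

Lemma fresh_notin_face : v \notin sg.
Proof. by apply: contra (fresh t0B); apply: (subsetP sg_t0). Qed.

Lemma glue_face_eq s : #|s| = 3 -> v \notin s -> s \subset v |: sg -> s = sg.
Proof.
move=> s3 vs sN; apply: sub_card_eq; last by rewrite s3 sg3.
apply/subsetP=> z zs; move: (subsetP sN z zs); rewrite !inE; case/orP=> // /eqP zv.
by move: vs; rewrite -zv zs.
Qed.

Lemma boundary_glue_new s : #|s| = 3 -> v \in s -> s \subset v |: sg ->
  s \in boundary ((v |: sg) |: B).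
Proof. by move=> s3 vs sN; rewrite in_boundary s3 deg_glue sN fresh_deg0. Qed.

Lemma boundary_glue_old s : s \in boundary B -> s != sg -> s \in boundary ((v |: sg) |: B).
Proof.
move=> sb ne; have [t tB st] := boundary_tet sb.
have vs : v \notin s by apply: contra (fresh tB); apply: (subsetP st).
move: sb; rewrite !in_boundary deg_glue => /andP[s3 /eqP->]; rewrite s3 /=.
case sN: (s \subset v |: sg) => //.
by move: ne; rewrite (glue_face_eq (eqP s3) vs sN) eqxx.
Qed.

Lemma boundary_glueP s : s \in boundary ((v |: sg) |: B) ->
  (v \in s) && (s \subset v |: sg) \/ [/\ v \notin s, s \in boundary B & s != sg].
Proof.
rewrite !in_boundary deg_glue => /andP[/eqP s3 /eqP deg1].
case vs: (v \in s).
  by left; move: deg1; rewrite fresh_deg0 //=; case: (s \subset _).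
right; move: deg1; case sN: (s \subset v |: sg) => deg1.
  by move: deg1; rewrite (glue_face_eq s3 (negbT vs) sN) deg_sg.
rewrite s3 -deg1 addn0 !eqxx; split => //.
by apply: contraNneq (negbT sN) => ->; apply: subsetUr.
Qed.

End Gluing.

Section StackedBall.
Variable W : finType.
Implicit Types (B : {set {set W}}) (s t X Y P Q : {set W}) (x y : W).

Lemma stacked_ball_card4 B : stacked_ball B -> forall t, t \in B -> #|t| = 4.
Proof.
elim=> {B} [t t4 | B sg v _ IH sg3 [t0 t0B sg_t0] _ fresh] t'; first by rewrite inE => /eqP->.
rewrite in_setU1 => /orP[/eqP->|]; last exact: IH.
by rewrite cardsU1 (fresh_notin_face fresh t0B sg_t0) sg3.
Qed.

Lemma stacked_ball_deg_le2 B : stacked_ball B -> forall s, #|s| = 3 -> deg B s <= 2.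
Proof.
elim=> {B} [t _ | B sg v _ IH sg3 [_ _ _] deg_sg fresh] s s3.
  by rewrite deg_set1; case: (_ \subset _).
rewrite deg_glue //; case sN: (s \subset v |: sg); last by rewrite addn0 IH.
case vs: (v \in s); first by rewrite (fresh_deg0 fresh vs).
by rewrite (glue_face_eq sg3 s3 (negbT vs) sN) /deg deg_sg.
Qed.

Lemma stacked_ball_clique B : stacked_ball B -> forall X : {set W}, #|X| = 4 ->
  (forall x y, x \in X -> y \in X -> joined B x y) -> X \in B.
Proof.
elim=> {B} [t t4 | B sg v _ IH sg3 [t0 t0B sg_t0] _ fresh] X X4 clX.
  have Xt : X \subset t.
    apply/subsetP=> x xX; case/existsP: (clX x x xX xX) => t'; rewrite !inE.
    by case/andP=> /eqP-> /andP[].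
  by rewrite inE (sub_card_eq Xt) ?X4 ?t4.
have vsg := fresh_notin_face fresh t0B sg_t0.
case vX: (v \in X).
  have XN : X \subset v |: sg.
    apply/subsetP=> y yX; move: (clX v y vX yX).
    by rewrite joinedU1 (negbTE (fresh_unjoined fresh y)) => /andP[].
  by rewrite in_setU1 (sub_card_eq XN) ?eqxx // X4 cardsU1 vsg sg3.
rewrite in_setU1 IH ?orbT // => x y xX yX.
move: (clX x y xX yX); rewrite joinedU1; case/orP=> // /andP[].
rewrite !inE; case: (x =P v) => [e|_]; first by move: vX; rewrite -e xX.
case: (y =P v) => [e|_ /= xsg ysg]; first by move: vX; rewrite -e yX.
by apply: (joined_tet t0B); apply: (subsetP sg_t0).
Qed.

Lemma stacked_ball_noC4 B : stacked_ball B -> forall p1 p2 p3 p4,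
  joined B p1 p2 -> joined B p2 p3 -> joined B p3 p4 -> joined B p4 p1 ->
  ~~ joined B p1 p3 -> ~~ joined B p2 p4 -> False.
Proof.
elim=> {B} [t _ | B sg v _ IH _ [t0 t0B sg_t0] _ fresh] p1 p2 p3 p4.
  move=> /existsP[t1]; rewrite !inE => /andP[/eqP-> /andP[h1 _]].
  move=> /existsP[t2]; rewrite !inE => /andP[/eqP-> /andP[_ h3]] _ _.
  by rewrite (joined_tet _ h1 h3) ?inE.
set N := v |: sg.
have joined_v y : joined (N |: B) v y -> y \in N.
  by rewrite joinedU1 (negbTE (fresh_unjoined fresh y)) => /andP[].
have joined_v' y : joined (N |: B) y v -> y \in N by rewrite joinedC; apply: joined_v.
have joined_N x y : x \in N -> y \in N -> joined (N |: B) x y.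
  by move=> xN yN; rewrite joinedU1 xN yN orbT.
have joined_old x y : x != v -> y != v -> joined (N |: B) x y -> joined B x y.
  move=> xv yv; rewrite joinedU1 !inE (negbTE xv) (negbTE yv) => /orP[// | /andP[xs ys]].
  by apply: (joined_tet t0B); apply: (subsetP sg_t0).
move=> j12 j23 j34 j41 n13 n24.
case: (p1 =P v) => [e1|/eqP v1].
  by subst p1; rewrite joined_N in n24; [|apply: joined_v|apply: joined_v'].
case: (p2 =P v) => [e2|/eqP v2].
  by subst p2; rewrite joined_N in n13; [|apply: joined_v'|apply: joined_v].
case: (p3 =P v) => [e3|/eqP v3].
  by subst p3; rewrite joined_N in n24; [|apply: joined_v'|apply: joined_v].
case: (p4 =P v) => [e4|/eqP v4].
  by subst p4; rewrite joined_N in n13; [|apply: joined_v|apply: joined_v'].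
apply: (IH p1 p2 p3 p4); try exact: joined_old.
- by apply: contra n13; rewrite joinedU1 => ->.
- by apply: contra n24; rewrite joinedU1 => ->.
Qed.

Lemma stacked_ball_opposite_unjoined B : stacked_ball B -> forall P Q (c d : W),
  P \in B -> Q \in B -> #|P :&: Q| = 3 -> c \in P :\: Q -> d \in Q :\: P ->
  ~~ joined B c d.
Proof.
elim=> {B} [t _ | B sg v _ IH sg3 [t0 t0B sg_t0] _ fresh] P Q c d PB QB PQ3 cPQ dQP.
  by move: PB QB cPQ; rewrite !inE => /eqP-> /eqP-> /andP[/negP].
have N4 : #|v |: sg| = 4 by rewrite cardsU1 (fresh_notin_face fresh t0B sg_t0) sg3.
have fresh_diff X Y x : #|X| = 4 -> #|X :&: Y| = 3 -> v \in X :\: Y -> x \in X :\: Y -> x = v.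
  move=> X4 XY3 vXY xXY; apply: (card_le1_eqP (A := X :\: Y)) => //.
  by rewrite card_setD_43.
have old_in_sg x X : X \in B -> x \in X -> x \in v |: sg -> x \in sg.
  by move=> XB xX; rewrite !inE => /orP[/eqP xv|//]; move: (fresh _ XB); rewrite -xv xX.
move: PB QB; rewrite !in_setU1 => /orP[/eqP PN|PB] /orP[/eqP QN|QB].
- by move: cPQ; rewrite PN QN setDv inE.
- have -> : c = v.
    apply: (fresh_diff P Q) => //; first by rewrite PN.
    by rewrite inE (fresh _ QB) PN setU11.
  rewrite joinedU1 (negbTE (fresh_unjoined fresh d)) /= -PN.
  by move: dQP; rewrite inE => /andP[/negbTE->]; rewrite andbF.
- have -> : d = v.
    apply: (fresh_diff Q P) => //; first by rewrite QN.
      by rewrite setIC.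
    by rewrite inE (fresh _ PB) QN setU11.
  rewrite joinedU1 joinedC (negbTE (fresh_unjoined fresh c)) /= -QN.
  by move: cPQ; rewrite inE => /andP[/negbTE->].
- have ncd := IH P Q c d PB QB PQ3 cPQ dQP.
  rewrite joinedU1 (negbTE ncd) /=; apply: contra ncd => /andP[cN dN].
  move: cPQ dQP; rewrite !inE => /andP[_ cP] /andP[_ dQ].
  apply: (joined_tet t0B); apply: (subsetP sg_t0).
    exact: (old_in_sg c P).
  exact: (old_in_sg d Q).
Qed.

Lemma stacked_ball_joined_boundary B : stacked_ball B -> forall u w : W, u != w ->
  joined B u w -> exists2 s, s \in boundary B & (u \in s) && (w \in s).
Proof.
elim=> {B} [t t4 | B sg v _ IH sg3 [t0 t0B sg_t0] deg_sg fresh] u w uw.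
  case/existsP=> t'; rewrite !inE => /andP[/eqP-> /andP[ut wt]].
  have [z [zt zu zw]] : exists z, [/\ z \in t, z != u & z != w].
    by apply: exists_other; rewrite t4.
  exists [set u; w; z]; last by rewrite !inE !eqxx /= ?orbT.
  by rewrite in_boundary cards3 // 1?eq_sym //= deg_set1 !subUset !sub1set ut wt zt.
have vsg := fresh_notin_face fresh t0B sg_t0.
set N := v |: sg.
have face_N x y : x \in N -> y \in N ->
    exists2 s, s \in boundary (N |: B) & (x \in s) && (y \in s).
  move=> xN yN; have [z [zs zx zy]] : exists z, [/\ z \in sg, z != x & z != y].
    by apply: exists_other; rewrite sg3.
  have zv : z != v by apply: contraTneq zs => ->.
  exists (N :\ z); last by rewrite !in_setD1 eq_sym zx xN eq_sym zy yN.
  apply: boundary_glue_new => //.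
  - move: (cardsD1 z N); rewrite /N cardsU1 vsg sg3 in_setU1 zs orbT.
    by move=> /eqP; rewrite add1n eqSS => /eqP <-.
  - by rewrite in_setD1 eq_sym zv setU11.
  - exact: subsetDl.
rewrite joinedU1 => /orP[/(IH u w uw)[s sb /andP[us ws]] | /andP[]]; last exact: face_N.
case: (s =P sg) => [E|/eqP ne]; last by exists s; rewrite ?us ?ws ?boundary_glue_old.
by apply: face_N; rewrite !inE -E ?us ?ws orbT.
Qed.

Lemma stacked_ball_edge_faces B : stacked_ball B -> forall (u w : W) s1 s2 s3, u != w ->
  s1 \in boundary B -> s2 \in boundary B -> s3 \in boundary B ->
  (u \in s1) && (w \in s1) -> (u \in s2) && (w \in s2) -> (u \in s3) && (w \in s3) ->
  [\/ s1 = s2, s1 = s3 | s2 = s3].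
Proof.
elim=> {B} [t t4 | B sg v _ IH sg3 [t0 t0B sg_t0] deg_sg fresh] u w s1 s2 s3 uw.
  have sub s : s \in boundary [set t] -> s \subset t.
    by case/boundary_tet=> t'; rewrite inE => /eqP->.
  move=> b1 b2 b3; exact: (tet_edge_faces t4 uw (sub _ b1) (sub _ b2) (sub _ b3)
    (boundary_card b1) (boundary_card b2) (boundary_card b3)).
have vsg := fresh_notin_face fresh t0B sg_t0.
set N := v |: sg.
have N4 : #|N| = 4 by rewrite cardsU1 vsg sg3.
have glueP := boundary_glueP fresh sg3 deg_sg.
move=> b1 b2 b3 h1 h2 h3.
case: (boolP ((u == v) || (w == v))) => [uwv | ].
  have inN s : s \in boundary (N |: B) -> (u \in s) && (w \in s) -> s \subset N.
    move=> sb /andP[us ws]; case: (glueP s sb) => [/andP[] // | [vs _ _]].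
    by case/orP: uwv vs => /eqP <-; rewrite ?us ?ws.
  exact: (tet_edge_faces N4 uw (inN _ b1 h1) (inN _ b2 h2) (inN _ b3 h3)
    (boundary_card b1) (boundary_card b2) (boundary_card b3)).
rewrite negb_or => /andP[uv wv].
pose proj s := if v \in s then sg else s.
have proj_boundary s : s \in boundary (N |: B) -> (u \in s) && (w \in s) ->
    [/\ proj s \in boundary B, u \in proj s & w \in proj s].
  rewrite /proj => sb /andP[us ws]; case: (glueP s sb) => [/andP[vs /subsetP sN] | [vs sb' _]].
    rewrite vs in_boundary sg3 /deg deg_sg /=; move: (sN u us) (sN w ws).
    by rewrite !in_setU1 (negbTE uv) (negbTE wv).
  by rewrite (negbTE vs).
have proj_inj s s' : s \in boundary (N |: B) -> s' \in boundary (N |: B) ->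
    (u \in s) && (w \in s) -> (u \in s') && (w \in s') -> proj s = proj s' -> s = s'.
  rewrite /proj => sb sb' /andP[us ws] /andP[us' ws'].
  have vuw s'' : s'' \in boundary (N |: B) -> u \in s'' -> w \in s'' -> v \in s'' ->
      s'' = [set v; u; w].
    move=> b'' u'' w'' v''; apply: eq_set3; rewrite ?(boundary_card b'') 1?eq_sym //.
    by rewrite eq_sym.
  case: (glueP s sb) => [/andP[vs _] | [vs _ ne]];
    case: (glueP s' sb') => [/andP[vs' _] | [vs' _ ne']].
  - by rewrite (vuw s) // (vuw s').
  - by rewrite vs (negbTE vs') => E; rewrite E eqxx in ne'.
  - by rewrite vs' (negbTE vs) => E; rewrite E eqxx in ne.
  - by rewrite (negbTE vs) (negbTE vs').
have [p1 u1 w1] := proj_boundary s1 b1 h1.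
have [p2 u2 w2] := proj_boundary s2 b2 h2.
have [p3 u3 w3] := proj_boundary s3 b3 h3.
case: (IH u w _ _ _ uw p1 p2 p3); rewrite ?u1 ?w1 ?u2 ?w2 ?u3 ?w3 // => E;
  [constructor 1 | constructor 2 | constructor 3]; exact: proj_inj E.
Qed.

End StackedBall.

Section TetFlip.
Variable W : finType.
Implicit Types (B : {set {set W}}) (s t P Q : {set W}).

Definition tet_flip B (a b c d x : W) : {set {set W}} :=
  [set a; c; d; x] |: ([set b; c; d; x] |: (B :\ [set a; b; c; x] :\ [set a; b; d; x])).

Lemma deg_ge_pair B P Q s : P \in B -> Q \in B -> P != Q ->
  (s \subset P) + (s \subset Q) <= deg B s.
Proof.
move=> PB QB PQ; case sP: (s \subset P); case sQ: (s \subset Q) => //=.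
- exact: deg_ge2 PB QB PQ sP sQ.
- by rewrite deg_gt0; apply/existsP; exists P; rewrite PB sP.
- by rewrite deg_gt0; apply/existsP; exists Q; rewrite QB sQ.
Qed.

Lemma set4C23 (p q r u : W) : [set p; q; r; u] = [set p; r; q; u].
Proof. by apply/setP=> e; rewrite !inE -!orbA (orbCA (e == q)). Qed.

Lemma tet_flipC B (a b c d x : W) : tet_flip B a b c d x = tet_flip B a b d c x.
Proof.
apply/setP=> t; rewrite /tet_flip (set4C23 a c d x) (set4C23 b c d x) !inE.
by rewrite (andbCA (t != _)).
Qed.

Lemma tet_flip_new B (a b c d x : W) :
  [set a; b; c; x] \notin B -> [set a; b; d; x] \notin B ->
  tet_flip ([set a; b; c; x] |: ([set a; b; d; x] |: B)) a b c d x =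
  [set a; c; d; x] |: ([set b; c; d; x] |: B).
Proof.
move=> PB QB; apply/setP=> t; rewrite /tet_flip !inE; do 2 congr (_ || _).
case: (t =P [set a; b; c; x]) => [->|_]; first by rewrite /= andbF (negbTE PB).
by case: (t =P [set a; b; d; x]) => [->|_]; rewrite /= ?andbF ?(negbTE QB).
Qed.

Lemma tet_flipU1 B N (a b c d x : W) : N != [set a; b; c; x] -> N != [set a; b; d; x] ->
  tet_flip (N |: B) a b c d x = N |: tet_flip B a b c d x.
Proof.
move=> NP NQ; apply/setP=> t; rewrite /tet_flip !inE.
by case: (t =P N) => [->|_]; rewrite ?NP ?NQ ?orbT.
Qed.

End TetFlip.

Section TetFlipDeg.
Variables (W : finType) (B : {set {set W}}) (a b c d x : W).
Implicit Types s t : {set W}.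
Hypotheses (U : uniq [:: a; b; c; d; x])
  (PB : [set a; b; c; x] \in B) (QB : [set a; b; d; x] \in B) (ncd : ~~ joined B c d).

Lemma deg_tet_flip s : deg (tet_flip B a b c d x) s =
  deg B s - (s \subset [set a; b; c; x]) - (s \subset [set a; b; d; x])
    + (s \subset [set b; c; d; x]) + (s \subset [set a; c; d; x]).
Proof.
have [[ab ac ad ax] [bc bd bx] cd cx dx] := uniq5P U.
have nB y : [set y; c; d; x] \notin B.
  by apply: contra ncd => /joined_tet; apply; rewrite !inE eqxx ?orbT.
have PQ : [set a; b; d; x] != [set a; b; c; x].
  by apply/negP=> /eqP /setP /(_ d); rewrite !inE !eqxx /=; rewrite_neqs.
have PQ' : [set a; c; d; x] != [set b; c; d; x].
  by apply/negP=> /eqP /setP /(_ a); rewrite !inE !eqxx /=; rewrite_neqs.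
rewrite /tet_flip !degU1 !degD1 PB !inE QB PQ /= !andbT.
by rewrite (negbTE (nB a)) (negbTE (nB b)) (negbTE PQ') !andbF !andbT.
Qed.

Lemma fresh_tet_flip (v : W) : (forall t, t \in B -> v \notin t) ->
  forall t, t \in tet_flip B a b c d x -> v \notin t.
Proof.
move=> fresh; have := fresh _ PB; have := fresh _ QB.
rewrite !inE -!orbA !negb_or => /and4P[va vb vd vx] /and4P[_ _ vc _] t.
rewrite !in_setU1 !in_setD1 => /or3P[/eqP-> | /eqP-> | /and3P[_ _ /fresh //]];
  by rewrite !inE -!orbA !negb_or; apply/and4P.
Qed.

Hypothesis deg_abx : deg B [set a; b; x] <= 2.

Lemma deg1_tet_flip s : #|s| = 3 ->
  s != [set a; b; c] -> s != [set a; b; d] -> s != [set a; c; d] -> s != [set b; c; d] ->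
  (deg (tet_flip B a b c d x) s == 1) = (deg B s == 1).
Proof.
move=> s3 n1 n2 n3 n4; have [[ab ac ad ax] [bc bd bx] cd cx dx] := uniq5P U.
rewrite deg_tet_flip.
have PQ : [set a; b; c; x] != [set a; b; d; x].
  by apply/negP=> /eqP /setP /(_ c); rewrite !inE !eqxx /=; rewrite_neqs.
have hge := deg_ge_pair s PB QB PQ.
have hsum := mem5_le_card s U; rewrite s3 in hsum.
have h1 := set3_memPn s3 ab ac bc n1.
have h2 := set3_memPn s3 ab ad bd n2.
have h3 := set3_memPn s3 ac ad cd n3.
have h4 := set3_memPn s3 bc bd cd n4.
have habx : [&& a \in s, b \in s & x \in s] ==> (deg B s == 2).
  apply/implyP=> /and3P[As Bs Xs]; rewrite (eq_set3 s3 As Bs Xs ab ax bx) eqn_leq deg_abx /=.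
  have := deg_ge_pair [set a; b; x] PB QB PQ.
  by rewrite !subUset !sub1set !inE !eqxx !orbT.
have hcd : (c \in s) && (d \in s) ==> (deg B s == 0).
  apply/implyP=> /andP[cs ds]; rewrite deg_eq0 // => t tB; apply: contra ncd => /subsetP st.
  exact: (joined_tet tB (st c cs) (st d ds)).
(* Everything now depends only on which of a, b, c, d, x lie in s. *)
rewrite !subset_card_setI !cardsI4 // s3 in hge *.
move: hge hsum h1 h2 h3 h4 habx hcd.
move: (a \in s) (b \in s) (c \in s) (d \in s) (x \in s) (deg B s) => ia ib ic id ix n.
clear; by case: ia; case: ib; case: ic; case: id; case: ix => /=; lia.
Qed.

Lemma boundary_tet_flip : deg B [set a; b; c] = 1 -> deg B [set a; b; d] = 1 ->
  boundary (tet_flip B a b c d x) = edge_flip (boundary B) a b c d.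
Proof.
move=> deg_abc deg_abd; have [[ab ac ad ax] [bc bd bx] cd cx dx] := uniq5P U.
have deg_cd s : c \in s -> d \in s -> deg B s = 0.
  move=> cs ds; apply: deg_eq0 => t tB; apply: contra ncd => /subsetP st.
  exact: (joined_tet tB (st c cs) (st d ds)).
apply/setP=> s; rewrite in_boundary /edge_flip !inE.
case: (s =P [set a; c; d]) => [->|/eqP n1].
  rewrite cards3 // eqxx deg_tet_flip deg_cd ?inE ?eqxx ?orbT //.
  by rewrite !subset_card_setI !cardsI4 ?cards3 // !inE !eqxx; rewrite_neqs.
case: (s =P [set b; c; d]) => [->|/eqP n2].
  rewrite cards3 // eqxx deg_tet_flip deg_cd ?inE ?eqxx ?orbT //.
  by rewrite !subset_card_setI !cardsI4 ?cards3 // !inE !eqxx; rewrite_neqs; rewrite orbT.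
case: (s =P [set a; b; c]) => [->|/eqP n3].
  rewrite cards3 // eqxx deg_tet_flip deg_abc.
  rewrite !subset_card_setI !cardsI4 ?cards3 // !inE !eqxx; rewrite_neqs.
  by rewrite /= ?andbF ?orbF.
case: (s =P [set a; b; d]) => [->|/eqP n4].
  rewrite cards3 // eqxx deg_tet_flip deg_abd.
  rewrite !subset_card_setI !cardsI4 ?cards3 // !inE !eqxx; rewrite_neqs.
  by rewrite /= ?andbF ?orbF.
by case s3: (#|s| == 3); rewrite //= (deg1_tet_flip (eqP s3) n3 n4 n1 n2).
Qed.

End TetFlipDeg.

Lemma subset_tets_fresh (W : finType) (a b c d x : W) (s : {set W}) :
  uniq [:: a; b; c; d; x] -> #|s| = 3 -> c \notin s ->
  s != [set a; b; d] -> s != [set a; b; x] ->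
  ~~ (s \subset [set a; b; c; x]) /\
  (s \subset [set a; b; d; x]) =
    (s \subset [set b; c; d; x]) + (s \subset [set a; c; d; x]) :> nat.
Proof.
move=> U s3 cs n1 n2; have [[ab ac ad ax] [bc bd bx] cd cx dx] := uniq5P U.
have hsum := mem5_le_card s U; rewrite s3 in hsum.
have h1 := set3_memPn s3 ab ad bd n1.
have h2 := set3_memPn s3 ab ax bx n2.
rewrite !subset_card_setI !cardsI4 // s3.
move: hsum h1 h2 cs; move: (a \in s) (b \in s) (c \in s) (d \in s) (x \in s) => ia ib ic id ix.
by clear; case: ia; case: ib; case: ic; case: id; case: ix.
Qed.

Section FlipStacked.
Variable W : finType.
Implicit Types (B : {set {set W}}) (s t sg : {set W}).

Lemma stacked_ball_glue B s (v : W) : stacked_ball B -> #|s| = 3 -> deg B s = 1 ->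
  (forall t, t \in B -> v \notin t) -> stacked_ball ((v |: s) |: B).
Proof.
move=> HB s3 deg1 fresh; apply: sb_glue => //.
have : 0 < deg B s by rewrite deg1.
by rewrite deg_gt0 => /existsP[t /andP[tB st]]; exists t.
Qed.

Lemma stacked_ball_glue2 B (a b c d x : W) : stacked_ball B -> uniq [:: a; b; c; d; x] ->
  (forall t, t \in B -> a \notin t) -> (forall t, t \in B -> c \notin t) ->
  deg B [set b; d; x] = 1 -> stacked_ball ([set a; c; d; x] |: ([set b; c; d; x] |: B)).
Proof.
move=> HB U afresh cfresh deg_bdx; have [[ab ac ad ax] [bc bd bx] cd cx dx] := uniq5P U.
have -> : [set b; c; d; x] = c |: [set b; d; x].
  by apply/setP=> e; rewrite !inE; case: (e == b); case: (e == c).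
have -> : [set a; c; d; x] = a |: [set c; d; x] by rewrite -!setUA.
apply: stacked_ball_glue; rewrite ?cards3 //.
- by apply: stacked_ball_glue; rewrite ?cards3.
- rewrite (deg_glue _ cfresh) (fresh_deg0 cfresh) ?inE ?eqxx //.
  by rewrite !subUset !sub1set !inE !eqxx /= !orbT.
- move=> t; rewrite in_setU1 => /orP[/eqP-> | /afresh //].
  by rewrite !inE; rewrite_neqs.
Qed.

Lemma stacked_ball_flip_glued_last B sg (v a b c d x : W) : stacked_ball B ->
  uniq [:: a; b; c; d; x] -> #|sg| = 3 -> deg B sg = 1 ->
  (forall t, t \in B -> v \notin t) -> (forall t, t \in B -> c \notin t) ->
  [set a; b; d; x] = v |: sg ->
  deg (v |: sg |: B) [set a; b; d] = 1 -> deg (v |: sg |: B) [set a; b; x] = 1 ->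
  stacked_ball ([set a; c; d; x] |: ([set b; c; d; x] |: B)).
Proof.
move=> HB U sg3 deg_sg fresh cB QN deg_abd deg_abx.
have [[ab ac ad ax] [bc bd bx] cd cx dx] := uniq5P U.
have sg_ne (p q r : W) : [set p; q; r] \subset [set a; b; d; x] ->
    deg (v |: sg |: B) [set p; q; r] = 1 -> [set p; q; r] != sg.
  rewrite (deg_glue _ fresh) -QN => -> /eqP; apply: contraTneq => ->.
  by rewrite deg_sg.
have in_sg y : y \in [set a; b; d; x] -> y != v -> y \in sg.
  by rewrite QN in_setU1 => /orP[/eqP-> | //]; rewrite eqxx.
have : v \in [set a; b; d; x] by rewrite QN setU11.
rewrite !inE -!orbA => /or4P[] /eqP ev.
- have sgE : sg = [set b; d; x].
    by apply: eq_set3 => //; apply: in_sg; rewrite ?inE ?eqxx ?orbT // ev // eq_sym.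
  apply: stacked_ball_glue2 => //; first by rewrite -ev.
  by rewrite -sgE.
- have sgE : sg = [set a; d; x].
    by apply: eq_set3 => //; apply: in_sg; rewrite ?inE ?eqxx ?orbT // ev // eq_sym.
  rewrite setUCA; apply: (@stacked_ball_glue2 _ b a) => //.
  + by rewrite /= !inE; rewrite_neqs.
  + by rewrite -ev.
  + by rewrite -sgE.
- have sgE : sg = [set a; b; x].
    by apply: eq_set3 => //; apply: in_sg; rewrite ?inE ?eqxx ?orbT // ev // eq_sym.
  have abxQ : [set a; b; x] \subset [set a; b; d; x].
    by rewrite !subUset !sub1set !inE !eqxx !orbT.
  by have := sg_ne _ _ _ abxQ deg_abx; rewrite sgE eqxx.
- have sgE : sg = [set a; b; d].
    by apply: eq_set3 => //; apply: in_sg; rewrite ?inE ?eqxx ?orbT // ev // eq_sym.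
  by have := sg_ne _ _ _ (subsetUl _ _) deg_abd; rewrite sgE eqxx.
Qed.

(* As [c] is new, [[set a; b; c; x] |: B] is [B] with a tetrahedron glued on [abx]. *)
Lemma stacked_ball_flip_glued B : stacked_ball B -> forall a b c d x : W,
  uniq [:: a; b; c; d; x] ->
  (forall t, t \in B -> c \notin t) -> [set a; b; d; x] \in B ->
  deg B [set a; b; d] = 1 -> deg B [set a; b; x] = 1 ->
  stacked_ball (tet_flip ([set a; b; c; x] |: B) a b c d x).
Proof.
elim=> {B} [t _ | B sg v HB IH sg3 [t0 t0B sg_t0] deg_sg fresh]
  a b c d x U cfresh QB deg_abd deg_abx;
  have [[ab ac ad ax] [bc bd bx] cd cx dx] := uniq5P U.
  move: QB; rewrite in_set1 => /eqP <-.
  rewrite -[[set [set a; b; d; x]]]setU0 tet_flip_new ?inE // setU0.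
  rewrite (_ : [set a; c; d; x] = a |: [set c; d; x]); last by rewrite -!setUA.
  apply: stacked_ball_glue; rewrite ?cards3 ?deg_set1 //.
  - by apply: sb_base; rewrite cards4.
  - by rewrite !subUset !sub1set !inE !eqxx /= !orbT.
  - by move=> t'; rewrite inE => /eqP->; rewrite !inE; rewrite_neqs.
have cN : c \notin v |: sg by apply: cfresh; rewrite setU11.
have cB t : t \in B -> c \notin t by move=> tB; apply: cfresh; rewrite in_setU1 tB orbT.
have PB : [set a; b; c; x] \notin B by apply/negP=> /cB; rewrite !inE eqxx !orbT.
move: QB; rewrite in_setU1 => /orP[/eqP QN | QB].
  rewrite -QN tet_flip_new ?QN ?glue_notin //.
  exact: (stacked_ball_flip_glued_last HB U sg3 deg_sg fresh cB).
have abxQ : [set a; b; x] \subset [set a; b; d; x].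
  by rewrite !subUset !sub1set !inE !eqxx !orbT.
have [deg_abd' abdN] := deg_glue_eq1 fresh QB (subsetUl _ _) deg_abd.
have [deg_abx' abxN] := deg_glue_eq1 fresh QB abxQ deg_abx.
have vQ := fresh _ QB.
have vc : v != c by apply: contraNneq cN => <-; rewrite setU11.
have PQB : [set a; b; c; x] \in [set a; b; c; x] |: B by rewrite setU11.
have QPB : [set a; b; d; x] \in [set a; b; c; x] |: B by rewrite in_setU1 QB orbT.
rewrite setUCA tet_flipU1; first last.
- by apply: contraNneq vQ => <-; rewrite setU11.
- by apply: contraNneq cN => ->; rewrite !inE eqxx !orbT.
apply: stacked_ball_glue => //; first exact: IH.
- have ncd : ~~ joined ([set a; b; c; x] |: B) c d.
    by rewrite joinedU1 (negbTE (fresh_unjoined cB d)) !inE eqxx; rewrite_neqs.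
  have csg : c \notin sg by apply: contra (cB _ t0B); apply: (subsetP sg_t0).
  have sg_abd : sg != [set a; b; d] by apply: contraNneq abdN => ->; apply: subsetUr.
  have sg_abx : sg != [set a; b; x] by apply: contraNneq abxN => ->; apply: subsetUr.
  have [/negbTE sgP sgQ] := subset_tets_fresh U sg3 csg sg_abd sg_abx.
  rewrite deg_tet_flip // degU1 PB sgP /= /deg deg_sg -/deg.
  by move: sgQ; do 3 case: (sg \subset _).
- apply: fresh_tet_flip => // t; rewrite in_setU1 => /orP[/eqP-> | /fresh //].
  by move: vQ; rewrite !inE -!orbA !negb_or => /and4P[va vb _ vx]; apply/and4P.
Qed.

Lemma stacked_ball_flip_last B sg (v a b c d x : W) : stacked_ball B ->
  uniq [:: a; b; c; d; x] -> #|sg| = 3 -> deg B sg = 1 ->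
  (forall t, t \in B -> v \notin t) -> [set a; b; c; x] = v |: sg ->
  [set a; b; d; x] \in B -> deg (v |: sg |: B) [set a; b; d] = 1 ->
  stacked_ball (tet_flip (v |: sg |: B) a b c d x).
Proof.
move=> HB U sg3 deg_sg fresh PN QB deg_abd.
have [[ab ac ad ax] [bc bd bx] cd cx dx] := uniq5P U.
have vc : v = c.
  move: (setU11 v sg) (fresh _ QB); rewrite -PN !inE -!orbA.
  by case/or4P=> /eqP->; rewrite ?eqxx ?orbT.
have in_sg y : y \in [set a; b; c; x] -> y != c -> y \in sg.
  by rewrite PN in_setU1 vc => /orP[/eqP-> | //]; rewrite eqxx.
have sgE : sg = [set a; b; x].
  by apply: eq_set3 => //; apply: in_sg; rewrite ?inE ?eqxx ?orbT // eq_sym.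
rewrite -PN; apply: stacked_ball_flip_glued => //.
- by move=> t tB; rewrite -vc; apply: fresh.
- by case: (deg_glue_eq1 fresh QB (subsetUl _ _) deg_abd).
- by rewrite -sgE.
Qed.

Lemma stacked_ball_tet_flip B : stacked_ball B -> forall a b c d x : W,
  uniq [:: a; b; c; d; x] -> [set a; b; c; x] \in B -> [set a; b; d; x] \in B ->
  deg B [set a; b; c] = 1 -> deg B [set a; b; d] = 1 -> ~~ joined B c d ->
  stacked_ball (tet_flip B a b c d x).
Proof.
elim=> {B} [t _ | B sg v HB IH sg3 [t0 t0B sg_t0] deg_sg fresh]
  a b c d x U PB QB deg_abc deg_abd ncd;
  have [[ab ac ad ax] [bc bd bx] cd cx dx] := uniq5P U.
  move: PB QB; rewrite !in_set1 => /eqP <- /eqP /setP /(_ c).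
  by rewrite !inE !eqxx /=; rewrite_neqs.
move: PB QB; rewrite !in_setU1 => /orP[/eqP PN | PB] /orP[/eqP QN | QB].
- by move: QN; rewrite -PN => /setP /(_ c); rewrite !inE !eqxx /=; rewrite_neqs.
- exact: (stacked_ball_flip_last HB U sg3 deg_sg fresh PN).
- rewrite tet_flipC; apply: (stacked_ball_flip_last HB _ sg3 deg_sg fresh QN) => //.
  by rewrite /= !inE; rewrite_neqs.
have [deg_abc' abcN] := deg_glue_eq1 fresh PB (subsetUl _ _) deg_abc.
have [deg_abd' abdN] := deg_glue_eq1 fresh QB (subsetUl _ _) deg_abd.
have ncd' : ~~ joined B c d by apply: contra ncd; rewrite joinedU1 => ->.
rewrite tet_flipU1; first last.
- by apply: contraNneq (fresh _ QB) => <-; rewrite setU11.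
- by apply: contraNneq (fresh _ PB) => <-; rewrite setU11.
apply: stacked_ball_glue => //; first exact: IH.
- have cdsg : ~~ ((c \in sg) && (d \in sg)).
    apply: contra ncd' => /andP[cs ds].
    by apply: (joined_tet t0B); apply: (subsetP sg_t0).
  apply/eqP; rewrite deg1_tet_flip ?(stacked_ball_deg_le2 HB) ?cards3 //.
  + by rewrite /deg deg_sg.
  + by apply: contraNneq abcN => ->; apply: subsetUr.
  + by apply: contraNneq abdN => ->; apply: subsetUr.
  + by apply: contraNneq cdsg => ->; rewrite !inE !eqxx !orbT.
  + by apply: contraNneq cdsg => ->; rewrite !inE !eqxx !orbT.
- by apply: fresh_tet_flip.
Qed.

End FlipStacked.

Section Image.
Variables (W V : finType) (f : W -> V).
Hypothesis injf : injective f.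
Implicit Types (B : {set {set W}}) (s t : {set W}).

Lemma subset_imset_inj s t : (f @: s \subset f @: t) = (s \subset t).
Proof.
apply/idP/idP; last exact: imsetS.
move=> /subsetP st; apply/subsetP=> z zs.
by have := st (f z); rewrite !mem_imset // => /(_ zs).
Qed.

Lemma deg_imset B s : deg [set f @: t | t : {set W} in B] (f @: s) = deg B s.
Proof.
rewrite /deg -(card_imset _ (imset_inj injf)); apply: eq_card => T; rewrite inE.
apply/andP/imsetP=> [[/imsetP[t tB ->] st] | [t]]; last first.
  by rewrite inE => /andP[tB st] ->; split; [apply: imset_f | rewrite subset_imset_inj].
by exists t => //; rewrite inE tB -subset_imset_inj.
Qed.

Lemma stacked_ball_imset B : stacked_ball B -> stacked_ball [set f @: t | t : {set W} in B].
Proof.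
elim=> {B} [t t4 | B sg v HB IH sg3 [t0 t0B sg_t0] deg_sg fresh].
  by rewrite imset_set1; apply: sb_base; rewrite card_imset.
rewrite !imsetU1; apply: sb_glue => //.
- by rewrite card_imset.
- by exists (f @: t0); [apply: imset_f | rewrite subset_imset_inj].
- by have := deg_imset B sg; rewrite /deg deg_sg.
- by move=> T /imsetP[t tB ->]; rewrite mem_imset //; apply: fresh.
Qed.

Lemma boundary_imset B :
  boundary [set f @: t | t : {set W} in B] = [set f @: s | s : {set W} in boundary B].
Proof.
apply/setP=> s'; apply/idP/imsetP=> [|[s sb ->]]; last first.
  by move: sb; rewrite !in_boundary card_imset // deg_imset.
rewrite in_boundary => /andP[s3 /eqP deg1].
have : 0 < deg [set f @: t | t : {set W} in B] s' by rewrite deg1.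
rewrite deg_gt0 => /existsP[T /andP[/imsetP[t tB ->] st]].
have s'E : s' = f @: (f @^-1: s').
  apply/setP=> y; apply/idP/imsetP=> [ys|[z]]; last by rewrite inE => ? ->.
  by have /imsetP[z _ yz] := subsetP st y ys; exists z; rewrite // inE -yz.
move: (f @^-1: s') s'E s3 deg1 => s0 ->; rewrite card_imset // deg_imset => s3 deg1.
by exists s0; rewrite // in_boundary s3 deg1.
Qed.

End Image.

Lemma stacked_sphereP (V : finType) (S : {set {set V}}) :
  stacked_sphere S <-> exists2 B : {set {set V}}, stacked_ball B & S = boundary B.
Proof.
split=> [[W [B [f [injf HB ->]]]] | [B HB ->]].
  by exists [set f @: t | t : {set W} in B]; [apply: stacked_ball_imset | rewrite boundary_imset].
exists V, B, id; split => //; apply/setP=> s.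
by apply/idP/imsetP=> [sb | [t tb ->]]; [exists s | ]; rewrite ?imset_id.
Qed.

Section SphereEdges.
Variable V : finType.
Implicit Types (B S : {set {set V}}) (s t A : {set V}).

Lemma is_edge_boundary B (u w : V) : stacked_ball B ->
  is_edge (boundary B) u w = (u != w) && joined B u w.
Proof.
move=> HB; rewrite /is_edge; case: (u =P w) => //= /eqP uw; apply/existsP/idP.
  by case=> s /and3P[sb us ws]; apply: boundary_joined sb us ws.
by case/(stacked_ball_joined_boundary HB uw) => s sb /andP[us ws]; exists s; rewrite sb us ws.
Qed.

Lemma Sbar_boundary B A : stacked_ball B -> A \in Sbar (boundary B) -> A \in B.
Proof.
move=> HB; rewrite inE => /andP[/eqP A4 /forallP clA].
have jA p q : p \in A -> q \in A -> p != q -> joined B p q.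
  move=> pA qA pq; move: (clA p); rewrite pA /= => /forallP/(_ q).
  by rewrite qA pq is_edge_boundary // => /andP[].
apply: (stacked_ball_clique HB A4) => p q pA qA.
case: (p =P q) => [<- | /eqP pq]; last exact: jA.
have [z [zA zp _]] : exists z, [/\ z \in A, z != p & z != p] by apply: exists_other; rewrite A4.
have /existsP[t /and3P[tB pt _]] : joined B p z by apply: jA; rewrite // eq_sym.
exact: (joined_tet tB pt pt).
Qed.

Lemma Sbar_face_tet B A (a b c : V) : stacked_ball B -> A \in Sbar (boundary B) ->
  [set a; b; c] \subset A -> a != b -> a != c -> b != c ->
  exists2 x, x \notin [set a; b; c] & A = [set a; b; c; x].
Proof.
move=> HB HA; rewrite !subUset !sub1set => /andP[/andP[aA bA] cA] ab ac bc.
have AB := Sbar_boundary HB HA.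
have [x [xa xb xc AE]] := exists_fourth (stacked_ball_card4 HB AB) aA bA cA ab ac bc.
by exists x; rewrite // !inE; rewrite_neqs.
Qed.

Lemma is_edgeC S (u w : V) : is_edge S u w = is_edge S w u.
Proof.
rewrite /is_edge eq_sym; congr (_ && _).
by apply/existsP/existsP=> -[s /and3P[? ? ?]]; exists s; apply/and3P.
Qed.

Lemma stacked_sphere_noC4 S (p1 p2 p3 p4 : V) : stacked_sphere S ->
  is_edge S p1 p2 -> is_edge S p2 p3 -> is_edge S p3 p4 -> is_edge S p4 p1 ->
  p1 != p3 -> p2 != p4 -> ~~ is_edge S p1 p3 -> ~~ is_edge S p2 p4 -> False.
Proof.
case/stacked_sphereP=> B HB ->; rewrite !is_edge_boundary // => /andP[_ j12] /andP[_ j23].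
move=> /andP[_ j34] /andP[_ j41] -> ->; exact: stacked_ball_noC4 HB _ _ _ _ j12 j23 j34 j41.
Qed.

Lemma is_edge_edge_flip S (a b c d z w : V) : z \notin [set a; b; c; d] ->
  is_edge (edge_flip S a b c d) z w = is_edge S z w.
Proof.
rewrite !inE -!orbA !negb_or => /and4P[za zb zc zd].
rewrite /is_edge; congr (_ && _); apply/existsP/existsP=> -[s /and3P[sS zs ws]];
  exists s; rewrite zs ws !andbT; move: sS; rewrite /edge_flip !inE.
  by case/orP=> [/orP[] /eqP sE | /and3P[]//]; move: zs; rewrite sE !inE; rewrite_neqs.
move=> ->; rewrite andbT; apply/orP; right; apply/andP; split;
  by apply: contraTneq zs => ->; rewrite !inE; rewrite_neqs.
Qed.

Lemma stacked_ball_apex B s (x y : V) : stacked_ball B -> #|s| = 3 -> deg B s = 1 ->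
  y |: s \in B -> x \notin s -> (forall z, z \in s -> joined B x z) -> x = y.
Proof.
move=> HB s3 deg1 tB xs jx.
have /set0Pn[z0 z0s] : s != set0 by rewrite -card_gt0 s3.
have K4 : #|x |: s| = 4 by rewrite cardsU1 xs s3.
have KB : x |: s \in B.
  apply: (stacked_ball_clique HB K4) => p q; rewrite !in_setU1.
  case/orP=> [/eqP-> | ps] /orP[/eqP-> | qs].
  - by case/existsP: (jx _ z0s) => t /and3P[tB' xt _]; apply: (joined_tet tB' xt xt).
  - exact: jx.
  - by rewrite joinedC; apply: jx.
  - by apply: (joined_tet tB); rewrite in_setU1 ?ps ?qs orbT.
have := deg1_eq deg1 KB tB (subsetUr _ _) (subsetUr _ _).
by move=> /setP /(_ x); rewrite !in_setU1 eqxx (negbTE xs) !orbF => /esym /eqP.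
Qed.

Lemma stacked_ball_apex_unjoined B (p q r x y : V) : stacked_ball B ->
  [set p; q; r] \in boundary B -> [set p; q; r; y] \in B -> x \notin [set p; q; r] ->
  joined B x p -> joined B x q -> x != y -> ~~ joined B x r.
Proof.
move=> HB pqr QB xpqr jxp jxq; apply: contra => jxr; apply/eqP.
apply: (stacked_ball_apex HB (boundary_card pqr) (boundary_deg pqr)) => //.
  by rewrite setUC.
by move=> z; rewrite !inE -!orbA => /or3P[] /eqP->.
Qed.

End SphereEdges.

Section FlipAdjacency.
Variable V : finType.
Implicit Types (B : {set {set V}}) (s : {set V}).
Variables (a b c d : V).
Hypotheses (ab : a != b) (ac : a != c) (ad : a != d) (bc : b != c) (bd : b != d) (cd : c != d).

Lemma dual_adj_tetsE (x y : V) : x \notin [set a; b; c] -> y \notin [set a; b; d] ->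
  x != d -> y != c -> dual_adj [set a; b; c; x] [set a; b; d; y] = (x == y).
Proof.
rewrite !inE -!orbA !negb_or => /and3P[xa xb xc] /and3P[ya yb yd] xd yc.
have PQ : [set a; b; c; x] != [set a; b; d; y].
  by apply/negP=> /eqP/setP/(_ c); rewrite !inE eqxx orbT; rewrite_neqs.
have [ax bx cx] : [/\ a != x, b != x & c != x] by split; rewrite eq_sym.
rewrite /dual_adj PQ setIC cardsI4 // !inE !eqxx ?orbT /=; rewrite_neqs.
by case: (x == y).
Qed.

Lemma edge_flip_ab_not_edge B : stacked_ball B ->
  [set a; b; c] \in boundary B -> [set a; b; d] \in boundary B ->
  ~~ is_edge (edge_flip (boundary B) a b c d) a b.
Proof.
move=> HB abc abd; rewrite /is_edge ab /=; apply/existsP=> -[s /and3P[sT As Bs]].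
move: sT; rewrite /edge_flip in_setU !in_setD1 in_set2 -orbA.
case/or3P=> [/eqP sE | /eqP sE | /and3P[n2 n1 sb]].
- by move: Bs; rewrite sE !inE; rewrite_neqs.
- by move: As; rewrite sE !inE; rewrite_neqs.
have in_ab (z : V) : (a \in [set a; b; z]) && (b \in [set a; b; z]) by rewrite !inE !eqxx ?orbT.
case: (stacked_ball_edge_faces HB ab abc abd sb (in_ab c) (in_ab d) (introT andP (conj As Bs))).
- by move/setP/(_ c); rewrite !inE eqxx ?orbT; rewrite_neqs.
- by move=> E; rewrite E eqxx in n1.
- by move=> E; rewrite E eqxx in n2.
Qed.

Lemma adjacent_flip_stacked B (x y : V) : stacked_ball B ->
  [set a; b; c] \in boundary B -> [set a; b; d] \in boundary B ->
  [set a; b; c; x] \in B -> [set a; b; d; y] \in B ->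
  x \notin [set a; b; c] -> y \notin [set a; b; d] ->
  dual_adj [set a; b; c; x] [set a; b; d; y] ->
  ~~ is_edge (boundary B) c d /\ stacked_sphere (edge_flip (boundary B) a b c d).
Proof.
move=> HB abc abd PB QB xabc yabd adj; have /andP[PQ _] := adj.
have xd : x != d.
  apply: contraNneq PQ => xd; apply/eqP; apply: (deg1_eq (boundary_deg abd) PB QB _ (subsetUl _ _)).
  by rewrite xd !subUset !sub1set !inE !eqxx !orbT.
have yc : y != c.
  apply: contraNneq PQ => yc; apply/eqP; apply: (deg1_eq (boundary_deg abc) PB QB (subsetUl _ _)).
  by rewrite yc !subUset !sub1set !inE !eqxx !orbT.
move: adj; rewrite dual_adj_tetsE // => /eqP yx; subst y.
have U : uniq [:: a; b; c; d; x].
  move: xabc; rewrite !inE !negb_or => /andP[/andP[xa xb] xc].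
  by rewrite /= !inE; rewrite_neqs.
have [[_ _ _ ax] [_ _ bx] _ cx dx] := uniq5P U.
have ncd : ~~ joined B c d.
  apply: (stacked_ball_opposite_unjoined HB PB QB); last 2 first.
  - by rewrite !inE !eqxx ?orbT; rewrite_neqs.
  - by rewrite !inE !eqxx ?orbT; rewrite_neqs.
  by rewrite setIC cardsI4 // !inE !eqxx ?orbT /=; rewrite_neqs.
split; first by rewrite is_edge_boundary // negb_and ncd orbT.
apply/stacked_sphereP; exists (tet_flip B a b c d x).
  by apply: stacked_ball_tet_flip => //; apply: boundary_deg.
rewrite boundary_tet_flip ?(boundary_deg abc) ?(boundary_deg abd) //.
by rewrite stacked_ball_deg_le2 ?cards3.
Qed.

Lemma flip_stacked_same_apex B (x y : V) : stacked_ball B ->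
  [set a; b; c] \in boundary B -> [set a; b; d] \in boundary B ->
  [set a; b; c; x] \in B -> [set a; b; d; y] \in B ->
  x \notin [set a; b; c; d] -> y \notin [set a; b; c; d] ->
  stacked_sphere (edge_flip (boundary B) a b c d) -> x = y.
Proof.
move=> HB abc abd PB QB xabcd yabcd HT; apply/eqP/contraT => xy; exfalso.
have jP p q : p \in [set a; b; c; x] -> q \in [set a; b; c; x] -> joined B p q.
  exact: joined_tet PB.
have jQ p q : p \in [set a; b; d; y] -> q \in [set a; b; d; y] -> joined B p q.
  exact: joined_tet QB.
move: (xabcd) (yabcd); rewrite !inE -!orbA !negb_or => /and4P[xa xb xc xd] /and4P[ya yb yc yd].
have in4 (p q r u : V) : [&& p \in [set p; q; r; u], q \in [set p; q; r; u],
    r \in [set p; q; r; u] & u \in [set p; q; r; u]] by rewrite !inE !eqxx !orbT.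
have /and4P[aP bP cP xP] := in4 a b c x.
have /and4P[aQ bQ dQ yQ] := in4 a b d y.
have nxd : ~~ joined B x d.
  by apply: (stacked_ball_apex_unjoined HB abd QB); rewrite ?jP // !inE; rewrite_neqs.
have nyc : ~~ joined B y c.
  apply: (stacked_ball_apex_unjoined HB abc PB); rewrite ?jQ // 1?eq_sym //.
  by rewrite !inE; rewrite_neqs.
set T := edge_flip (boundary B) a b c d.
have eT p q : p \notin [set a; b; c; d] -> is_edge T p q = (p != q) && joined B p q.
  by move=> pabcd; rewrite is_edge_edge_flip // is_edge_boundary.
case: (boolP (joined B x y)) => jxy.
- apply: (stacked_sphere_noC4 (p1 := c) (p2 := x) (p3 := y) (p4 := d) HT).
  + by rewrite is_edgeC eT // xc jP.
  + by rewrite eT // xy.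
  + by rewrite eT // yd jQ.
  + rewrite /is_edge eq_sym cd /=; apply/existsP; exists [set a; c; d].
    by rewrite /T /edge_flip !inE !eqxx !orbT.
  + by rewrite eq_sym.
  + by [].
  + by rewrite is_edgeC eT // negb_and nyc orbT.
  + by rewrite eT // negb_and nxd orbT.
- apply: (stacked_sphere_noC4 (p1 := a) (p2 := x) (p3 := b) (p4 := y) HT).
  + by rewrite is_edgeC eT // xa jP.
  + by rewrite eT // xb jP.
  + by rewrite is_edgeC eT // yb jQ.
  + by rewrite eT // ya jQ.
  + by [].
  + by [].
  + exact: edge_flip_ab_not_edge HB abc abd.
  + by rewrite eT // negb_and jxy orbT.
Qed.

Lemma flip_stacked_adjacent B (x y : V) : stacked_ball B ->
  [set a; b; c] \in boundary B -> [set a; b; d] \in boundary B ->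
  [set a; b; c; x] \in B -> [set a; b; d; y] \in B ->
  x \notin [set a; b; c] -> y \notin [set a; b; d] ->
  ~~ is_edge (boundary B) c d -> stacked_sphere (edge_flip (boundary B) a b c d) ->
  dual_adj [set a; b; c; x] [set a; b; d; y].
Proof.
move=> HB abc abd PB QB xabc yabd; rewrite is_edge_boundary // cd /= => ncd HT.
have xd : x != d by apply: contraNneq ncd => <-; apply: (joined_tet PB); rewrite !inE eqxx ?orbT.
have yc : y != c by apply: contraNneq ncd => <-; apply: (joined_tet QB); rewrite !inE eqxx ?orbT.
rewrite dual_adj_tetsE //; apply/eqP; apply: (flip_stacked_same_apex HB) => //.
  by rewrite setUC in_setU1 negb_or xd.
by rewrite -setUA (setUC [set c]) setUA setUC in_setU1 negb_or yc.
Qed.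

End FlipAdjacency.

Theorem theorem4p1 (V : finType) (S : {set {set V}}) (a b c d : V) :
  stacked_sphere S ->
  a != b -> a != c -> a != d -> b != c -> b != d -> c != d ->
  [set a; b; c] \in S -> [set a; b; d] \in S ->
  (* (a) *)
  (forall A B : {set V}, A \in Sbar S -> B \in Sbar S ->
     [set a; b; c] \subset A -> [set a; b; d] \subset B ->
     dual_adj A B ->
     ~~ is_edge S c d /\ stacked_sphere (edge_flip S a b c d))
  /\
  (* (b) *)
  (~~ is_edge S c d -> stacked_sphere (edge_flip S a b c d) ->
   forall A B : {set V}, A \in Sbar S -> B \in Sbar S ->
     [set a; b; c] \subset A -> [set a; b; d] \subset B ->
     dual_adj A B).
Proof.
move=> /stacked_sphereP[Bl HB ->] ab ac ad bc bd cd abc abd.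
split=> [A A' | ncd HT A A'] HA HA' sA sA';
  have [x xabc AE] := Sbar_face_tet HB HA sA ab ac bc;
  have [y yabd A'E] := Sbar_face_tet HB HA' sA' ab ad bd;
  move: (Sbar_boundary HB HA) (Sbar_boundary HB HA'); rewrite AE A'E => AB A'B.
- exact: adjacent_flip_stacked.
- exact: (flip_stacked_adjacent _ _ _ _ _ _ HB).
Qed.
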